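(* Let $S$ be a finite set of possibly partial distributions all with total mass $\textsc{Mass}(S)$, let $\textsc{OPT}_S$ be a minimum-entropy coupling of $S$, and let $\textsc{Major-Profile}_S$ be a minimum-entropy possibly partial distribution $d$ (of total mass $\textsc{Mass}(S)$) subject to $\textsc{Sketch}_d(x)\le\textsc{Profile}_S(x)$ for all $x\in(0,\textsc{Mass}(S)]$. Then $$H(\textsc{OPT}_S)\ge H(\textsc{Major-Profile}_S)\ge \max\Big(H(\textsc{Profile}_S),\,H\big(\textstyle\bigwedge S\big)\Big).$$
   Context: A possibly partial distribution $p$ is a vector of nonnegative reals sorted non-increasingly, $p(1)\ge p(2)\ge\cdots$, with total mass $\textsc{Mass}(p)=\sum_j p(j)\le1$; $H(p)=\sum_j p(j)\log_2(1/p(j))$. A coupling of $S=\{p_1,\dots,p_m\}$ is a nonnegative array $\mathcal C(i_1,\dots,i_m)$ whose sum over all tuples with $k$-th coordinate $i_k$ equals $p_k(i_k)$ for all $k,i_k$; $\textsc{OPT}_S$ minimizes entropy among couplings. $\textsc{Sketch}_p(x)=p(i)$ for $x\in(\sum_{j>i}p(j),\sum_{j\ge i}p(j)]$, defined on $(0,\textsc{Mass}(p)]$. $\textsc{Profile}_S(x)=\min_{p\in S}\textsc{Sketch}_p(x)$ and $H(\textsc{Profile}_S)=\int_0^{\textsc{Mass}(S)}\log_2(1/\textsc{Profile}_S(x))\,dx$. $\bigwedge S$ is the distribution defined by $\bigwedge S(i)=\min_{p\in S}\sum_{j=1}^i p(j)-\sum_{j=1}^{i-1}\bigwedge S(j)$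 (the greatest lower bound of $S$ in the majorization order). *)

From HB Require Import structures.
From mathcomp Require Import all_boot all_order all_algebra.
From mathcomp Require Import all_classical all_reals all_analysis.
Set Implicit Arguments. Unset Strict Implicit. Unset Printing Implicit Defensive.
Import Order.TTheory GRing.Theory Num.Theory.
Local Open Scope ring_scope.

Section Defs.
Variable R : realType.

Definition log2 (x : R) : R := ln x / ln 2.

(* A possibly partial distribution: finite list p(1) >= p(2) >= ... of
   nonnegative reals (0-indexed in Rocq), with total mass <= 1.
   Entries beyond the length of the list are 0. *)
Definition mass (p : seq R) : R := \sum_(x <- p) x.

Definition is_pdist (p : seq R) : Prop :=
  all (fun x => 0 <= x) p /\ sorted (fun x y => y <= x) p /\ mass p <= 1.

Definition entropy_seq (p : seq R) : R :=
  \sum_(x <- p) (if x == 0 then 0 else x * log2 x^-1).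

Definition tailmass (p : seq R) (i : nat) : R :=
  \sum_(i <= j < size p) p`_j.

(* Sketch_p(x) = p(i) for x in (sum_{j>i} p(j), sum_{j>=i} p(j)];
   these intervals are pairwise disjoint, so the sum selects the unique
   such i (and the value is 0 outside (0, Mass p]). *)
Definition Sketch (p : seq R) (x : R) : R :=
  \sum_(i < size p) (if (tailmass p i.+1 < x) && (x <= tailmass p i)
                     then p`_i else 0).

(* A finite set S of distributions, indexed by 'I_m.+1 (S nonempty). *)
Definition Profile (m : nat) (S : 'I_m.+1 -> seq R) (x : R) : R :=
  \big[Num.min/Sketch (S ord0) x]_(k < m.+1) Sketch (S k) x.

Definition entropy_profile (m : nat) (S : 'I_m.+1 -> seq R) (M : R) : \bar R :=
  (\int[@lebesgue_measure R]_(x in `]0%R, M]%classic) (log2 (Profile S x)^-1)%:E)%E.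

Definition maxsize (m : nat) (S : 'I_m.+1 -> seq R) : nat :=
  \max_(k < m.+1) size (S k).

(* sum_{j <= i} p(j) (1-indexed), i.e. first i.+1 entries, 0-indexed *)
Definition prefix (p : seq R) (n : nat) : R := \sum_(j < n) p`_j.

(* Greatest lower bound /\S, built by the defining recursion
   /\S(i) = min_{p in S} sum_{j<=i} p(j) - sum_{j<i} /\S(j). *)
Fixpoint meet_rec (m : nat) (S : 'I_m.+1 -> seq R) (n : nat) : seq R :=
  match n with
  | 0 => [::]
  | n'.+1 =>
      let s := meet_rec S n' in
      rcons s ((\big[Num.min/prefix (S ord0) n]_(k < m.+1) prefix (S k) n)
               - \sum_(y <- s) y)
  end.

Definition meetS (m : nat) (S : 'I_m.+1 -> seq R) : seq R :=
  meet_rec S (maxsize S).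

(* A coupling of S: a nonnegative array indexed by tuples
   (i_0, ..., i_m), each i_k < maxsize S (entries of p_k beyond its length
   are 0), whose k-th marginals are the p_k. *)
Definition tuple_idx (m : nat) (S : 'I_m.+1 -> seq R) : finType :=
  {ffun 'I_m.+1 -> 'I_(maxsize S)}.

Definition is_coupling (m : nat) (S : 'I_m.+1 -> seq R)
    (C : tuple_idx S -> R) : Prop :=
  (forall t, 0 <= C t) /\
  forall (k : 'I_m.+1) (i : 'I_(maxsize S)),
    \sum_(t : tuple_idx S | t k == i) C t = (S k)`_i.

Definition entropy_coupling (m : nat) (S : 'I_m.+1 -> seq R)
    (C : tuple_idx S -> R) : R :=
  \sum_(t : tuple_idx S) (if C t == 0 then 0 else C t * log2 (C t)^-1).

Definition major_feasible (m : nat) (S : 'I_m.+1 -> seq R) (M : R)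
    (d : seq R) : Prop :=
  is_pdist d /\ mass d = M /\
  forall x : R, 0 < x <= M -> Sketch d x <= Profile S x.

End Defs.

From Pilot Require Import Defs.
From HB Require Import structures.
From mathcomp Require Import all_boot all_order all_algebra.
From mathcomp Require Import all_classical all_reals all_analysis.
From mathcomp Require Import ring lra measurable_realfun.
Set Implicit Arguments. Unset Strict Implicit. Unset Printing Implicit Defensive.
Import Order.TTheory GRing.Theory Num.Theory.
Local Open Scope ring_scope.

(* Sorting the cell masses of a coupling C of S gives a distribution whose sketch
   lies below every Sketch_p, p in S: the mass of an atom of p of value at most v is
   spread over cells of value at most v, so for every threshold v the sorted cells
   put at least as much mass on values <= v as p does.  This distribution is feasible
   for Major-Profile and has the entropy of C, whence H(OPT) >= H(Major-Profile).

   For sorted d, H(d) is the integral of log2 (1/Sketch_d) over (0, Mass d], so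
   Sketch_d <= Profile_S gives H(d) >= H(Profile_S).

   Finally Sketch_d <= Sketch_p forces every prefix sum of d below that of p: the
   integral of 1/Sketch over the tail (tailmass n, Mass] counts the n top atoms, and
   over any interval it is at least the length since Sketch <= 1.  So d is majorized
   by the meet of S, whose prefix sums are the minima of those of S, and Karamata's
   inequality for the concave x log(1/x) gives H(d) >= H(meet S). *)

Section SortedNonneg.
Variable R : realType.
Implicit Types p : seq R.

Definition sorted_nonneg p := all (fun x => 0 <= x) p /\ sorted (fun x y => y <= x) p.

Lemma pdist_sorted_nonneg p : is_pdist p -> sorted_nonneg p.
Proof. by case=> ? []. Qed.

Lemma nth_nonneg p i : all (fun x => 0 <= x) p -> 0 <= p`_i.
Proof.
move=> /allP p_ge0; case: (ltnP i (size p)) => [i_lt|i_ge]; last by rewrite nth_default.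
by apply: p_ge0; rewrite mem_nth.
Qed.

Lemma nth_nonincr p i j : sorted_nonneg p -> (i <= j)%N -> p`_j <= p`_i.
Proof.
move=> [p_ge0 p_sorted] ij; case: (ltnP j (size p)) => [j_lt|j_ge].
  have ge_trans : transitive (fun x y : R => y <= x).
    by move=> ? ? ? /= h1 h2; exact: le_trans h2 h1.
  by apply: (sorted_leq_nth ge_trans _ 0 p_sorted) => //; rewrite inE ?(leq_ltn_trans ij).
by rewrite nth_default ?nth_nonneg.
Qed.

Lemma tailmassS p i : (i < size p)%N -> tailmass p i = p`_i + tailmass p i.+1.
Proof. by move=> i_lt; rewrite /tailmass big_ltn. Qed.

Lemma tailmass_out p i : (size p <= i)%N -> tailmass p i = 0.
Proof. by move=> i_ge; rewrite /tailmass big_geq. Qed.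

Lemma tailmass0 p : tailmass p 0 = mass p.
Proof. by rewrite /mass (big_nth 0). Qed.

Lemma tailmass_ge0 p i : all (fun x => 0 <= x) p -> 0 <= tailmass p i.
Proof. by move=> p_ge0; rewrite sumr_ge0 // => j _; exact: nth_nonneg. Qed.

Lemma tailmass_nonincr p i j : all (fun x => 0 <= x) p -> (i <= j)%N ->
  tailmass p j <= tailmass p i.
Proof.
move=> p_ge0 ij; case: (leqP (size p) j) => [j_ge|j_lt].
  by rewrite tailmass_out // tailmass_ge0.
rewrite /tailmass [leRHS](@big_cat_nat _ _ _ j) //= ?(ltnW j_lt) //.
by rewrite lerDr sumr_ge0 // => k _; exact: nth_nonneg.
Qed.

Lemma tailmass_le_mass p i : all (fun x => 0 <= x) p -> tailmass p i <= mass p.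
Proof. by move=> p_ge0; rewrite -tailmass0 tailmass_nonincr. Qed.

Lemma nth_le_tailmass p j : all (fun x => 0 <= x) p -> p`_j <= tailmass p j.
Proof.
move=> p_ge0; case: (ltnP j (size p)) => [j_lt|j_ge].
  by rewrite tailmassS // lerDl tailmass_ge0.
by rewrite nth_default // tailmass_ge0.
Qed.

Lemma prefixS p n : Defs.prefix p n.+1 = Defs.prefix p n + p`_n.
Proof. by rewrite /Defs.prefix big_ord_recr. Qed.

Lemma big_ord_nth_pad (F : R -> R) p N : F 0 = 0 -> (size p <= N)%N ->
  \sum_(i < N) F p`_i = \sum_(i < size p) F p`_i.
Proof.
move=> F0 /subnKC <-; rewrite big_split_ord /= [X in _ + X]big1 ?addr0 // => i _.
by rewrite nth_default ?leq_addr // F0.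
Qed.

Lemma prefix_tailmass p n : Defs.prefix p n + tailmass p n = mass p.
Proof.
rewrite -tailmass0; case: (leqP n (size p)) => [n_le|/ltnW n_ge].
  by rewrite /Defs.prefix /tailmass -(big_mkord xpredT (fun j => p`_j)) -big_cat_nat.
rewrite tailmass_out // addr0 /Defs.prefix (big_ord_nth_pad (F := id)) //.
by rewrite /tailmass big_mkord.
Qed.

End SortedNonneg.

Section SketchBlocks.
Variable R : realType.
Implicit Types p : seq R.

Lemma SketchE p j x : all (fun y => 0 <= y) p -> (j < size p)%N ->
  tailmass p j.+1 < x <= tailmass p j -> Sketch p x = p`_j.
Proof.
move=> p_ge0 j_lt /[dup] x_in /andP[x_gt x_le].
rewrite /Sketch (bigD1 (Ordinal j_lt)) //= x_in big1 ?addr0 // => i /= i_neq.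
have /negPf ij : val i != j by apply: contra i_neq => /eqP e; apply/eqP/val_inj.
case: (ltngtP i j) ij => // [i_lt|i_gt] _.
  by rewrite ltNge (le_trans x_le (tailmass_nonincr p_ge0 i_lt)).
by rewrite andbC leNgt (le_lt_trans (tailmass_nonincr p_ge0 i_gt) x_gt).
Qed.

Lemma Sketch_block p x : all (fun y => 0 <= y) p -> 0 < x <= mass p ->
  exists2 j, (j < size p)%N & tailmass p j.+1 < x <= tailmass p j.
Proof.
move=> p_ge0 /andP[x_gt x_le]; rewrite -tailmass0 in x_le.
suff /(_ (size p)) : forall n, tailmass p n < x ->
    exists2 j, (j < n)%N & tailmass p j.+1 < x <= tailmass p j.
  by rewrite tailmass_out //; apply.
elim=> [|n IH] x_gtn; first by move: (lt_le_trans x_gtn x_le); rewrite ltxx.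
case: (ltP (tailmass p n) x) => [/IH [j j_lt x_in]|x_len].
  by exists j => //; exact: ltnW.
by exists n; rewrite ?x_gtn ?x_len.
Qed.

Lemma Sketch_in01 p x : all (fun y => 0 <= y) p -> mass p <= 1 -> 0 < x <= mass p ->
  0 < Sketch p x <= 1.
Proof.
move=> p_ge0 mass_le1 x_in; have [j j_lt /[dup] x_inj /andP[x_gt x_le]] := Sketch_block p_ge0 x_in.
rewrite (SketchE p_ge0 j_lt x_inj); apply/andP; split.
  by move: (lt_le_trans x_gt x_le); rewrite (tailmassS j_lt) ltrDr.
exact: le_trans (nth_le_tailmass j p_ge0) (le_trans (tailmass_le_mass j p_ge0) mass_le1).
Qed.

Lemma Sketch_nondecr p x y : sorted_nonneg p -> 0 < x -> x <= y -> y <= mass p ->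
  Sketch p x <= Sketch p y.
Proof.
move=> p_sn x_gt xy y_le; have p_ge0 := p_sn.1.
have x_in : 0 < x <= mass p by rewrite x_gt (le_trans xy).
have y_in : 0 < y <= mass p by rewrite (lt_le_trans x_gt xy) y_le.
have [i i_lt /[dup] x_ini /andP[x_gt' _]] := Sketch_block p_ge0 x_in.
have [j j_lt /[dup] y_inj /andP[_ y_le']] := Sketch_block p_ge0 y_in.
rewrite (SketchE p_ge0 i_lt x_ini) (SketchE p_ge0 j_lt y_inj).
case: (leqP j i) => [|ij]; first exact: nth_nonincr.
have := le_trans xy (le_trans y_le' (tailmass_nonincr p_ge0 ij)).
by rewrite leNgt x_gt'.
Qed.

Definition lower_mass p (v : R) : R :=
  \sum_(0 <= j < size p) (if p`_j <= v then p`_j else 0).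

Lemma Sketch_leE p x v : sorted_nonneg p -> 0 < x <= mass p ->
  (Sketch p x <= v) = (x <= lower_mass p v).
Proof.
move=> p_sn x_in; have p_ge0 := p_sn.1.
have [j j_lt /[dup] x_inj /andP[x_gt x_le]] := Sketch_block p_ge0 x_in.
rewrite (SketchE p_ge0 j_lt x_inj) /lower_mass; apply/idP/idP => [pj_le|].
  apply: (le_trans x_le); rewrite (@big_cat_nat _ _ _ j) //= ?(ltnW j_lt) //.
  rewrite -[leLHS]add0r lerD //.
    by rewrite sumr_ge0 // => k _; case: ifP; rewrite ?nth_nonneg.
  apply: ler_sum_nat => k /andP[jk _].
  by rewrite (le_trans (nth_nonincr p_sn jk) pj_le).
apply: contraLR; rewrite -!ltNge => v_lt.
apply: (le_lt_trans _ x_gt).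
rewrite (@big_cat_nat _ _ _ j.+1) //= big_nat_cond big1 ?add0r.
  by apply: ler_sum => k _; case: ifP; rewrite ?nth_nonneg.
move=> k /andP[/andP[_ kj] _]; case: ifP => // pk_le.
by move: (lt_le_trans v_lt (nth_nonincr p_sn (kj : (k <= j)%N))); rewrite ltNge pk_le.
Qed.

End SketchBlocks.

Lemma measurable_nonincr_itv (R : realType) (a b : R) (f : R -> R) :
  {in `]a, b] &, {homo f : x y /~ x <= y}} -> measurable_fun `]a, b]%classic f.
Proof.
move=> f_ni; apply: (measurability (@RGenCInfty.G R)) => [|/= _ [_] [r] -> <-].
  exact: RGenCInfty.measurableE.
apply: is_interval_measurable => s t /= [s_in fs] [t_in ft] u /andP[su ut].
have u_in : u \in `]a, b].
  move: s_in t_in; rewrite !in_itv /= => /andP[a_lt _] /andP[_ t_le].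
  by rewrite (lt_le_trans a_lt su) (le_trans ut t_le).
split=> //=; move: ft; rewrite /= !in_itv /= !andbT => ft.
by apply: (le_trans ft); apply: f_ni.
Qed.

Section SketchIntegrals.
Variable R : realType.
Implicit Types p : seq R.
Local Open Scope classical_set_scope.

Variable h : R -> R.
Hypothesis h_ge0 : {in `]0, 1]%R, forall s, 0 <= h s}.
Hypothesis h_nonincr : {in `]0, 1]%R &, {homo h : s t /~ s <= t}}.

Lemma measurable_h_Sketch p (a b : R) : sorted_nonneg p -> mass p <= 1 ->
  0 <= a -> b <= mass p -> measurable_fun `]a, b] (fun x => (h (Sketch p x))%:E).
Proof.
move=> p_sn mass_le1 a_ge0 b_le; have p_ge0 := p_sn.1.
apply/measurable_EFinP; apply: measurable_nonincr_itv => x y.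
rewrite !in_itv /= => /andP[_ x_le] /andP[a_lt y_le] yx.
have y_gt := le_lt_trans a_ge0 a_lt.
have x_gt := lt_le_trans y_gt yx.
have Sx_in : 0 < Sketch p x <= 1 by apply: Sketch_in01; rewrite // x_gt (le_trans x_le b_le).
have Sy_in : 0 < Sketch p y <= 1 by apply: Sketch_in01; rewrite // y_gt (le_trans y_le b_le).
by apply: h_nonincr; rewrite ?in_itv //= Sketch_nondecr // (le_trans x_le b_le).
Qed.

Lemma integral_h_Sketch p n : sorted_nonneg p -> mass p <= 1 -> (n <= size p)%N ->
  (\int[@lebesgue_measure R]_(x in `]tailmass p n, mass p]) (h (Sketch p x))%:E
    = (\sum_(j < n) p`_j * h p`_j)%:E)%E.
Proof.
move=> p_sn mass_le1; have p_ge0 := p_sn.1.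
elim: n => [_|n IH n_lt]; first by rewrite tailmass0 set_itvoc0 integral_set0 big_ord0.
have split_itv : `]tailmass p n.+1, mass p] =
    `]tailmass p n.+1, tailmass p n] `|` `]tailmass p n, mass p].
  by apply: itv_bndbnd_setU; rewrite bnd_simp ?tailmass_nonincr ?tailmass_le_mass.
rewrite split_itv ge0_integral_setU //; rewrite -?split_itv; last 3 first.
- by apply: measurable_h_Sketch => //; apply: tailmass_ge0.
- move=> x; rewrite /= in_itv /= => /andP[x_gt x_le]; rewrite lee_fin; apply: h_ge0.
  by rewrite in_itv /= Sketch_in01 // x_le (le_lt_trans (tailmass_ge0 _ p_ge0) x_gt).
- apply/disj_setPS => x []; rewrite /= !in_itv /= => /andP[_ x_le] /andP[x_gt _].
  by move: (le_lt_trans x_le x_gt); rewrite ltxx.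
rewrite IH ?(ltnW n_lt) // big_ord_recr /= EFinD addeC; congr (_ + _)%E.
transitivity
  (\int[@lebesgue_measure R]_(x in `]tailmass p n.+1, tailmass p n]) (cst (h p`_n)%:E) x)%E.
  by apply: eq_integral => x; rewrite inE /= in_itv /= => x_in; rewrite (SketchE p_ge0 n_lt x_in).
rewrite integral_cst //= lebesgue_measure_itv /= lte_fin (tailmassS n_lt) ltrDr.
case: ltgtP (nth_nonneg n p_ge0) => // [pn_gt|<-] _; last by rewrite mule0 mul0r.
by rewrite -EFinD -EFinM addrK mulrC.
Qed.

End SketchIntegrals.

Section EntropyIntegral.
Variable R : realType.
Local Open Scope classical_set_scope.

Lemma ln2_gt0 : 0 < ln (2 : R).
Proof. by rewrite ln_gt0 // ltr1n. Qed.

Lemma log2V_ge0 (s : R) : s \in `]0, 1]%R -> 0 <= log2 s^-1.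
Proof.
rewrite in_itv /= => /andP[s_gt s_le1].
by rewrite /log2 divr_ge0 ?(ltW ln2_gt0) // ln_ge0 // invf_ge1.
Qed.

Lemma log2V_nonincr : {in `]0, 1]%R &, {homo (fun s : R => log2 s^-1) : s t /~ s <= t}}.
Proof.
move=> t s; rewrite !in_itv /= => /andP[t_gt _] /andP[s_gt _] st.
by rewrite /log2 ler_pM2r ?invr_gt0 ?ln2_gt0 // ler_ln ?posrE ?invr_gt0 // lef_pV2.
Qed.

Lemma entropy_seqE (p : seq R) :
  entropy_seq p = \sum_(j < size p) p`_j * log2 (p`_j)^-1.
Proof.
rewrite /entropy_seq (big_nth 0) big_mkord; apply: eq_bigr => j _.
by case: eqP => // ->; rewrite mul0r.
Qed.

Lemma entropy_seq_integral (p : seq R) : is_pdist p ->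
  (entropy_seq p)%:E =
  (\int[@lebesgue_measure R]_(x in `]0%R, mass p]) (log2 (Sketch p x)^-1)%:E)%E.
Proof.
move=> p_pd; rewrite entropy_seqE.
have := integral_h_Sketch log2V_ge0 log2V_nonincr (pdist_sorted_nonneg p_pd) p_pd.2.2 (leqnn _).
by rewrite tailmass_out // => <-.
Qed.

End EntropyIntegral.

Lemma bigmin_attained (R : realType) (n : nat) (F : 'I_n.+1 -> R) :
  exists k, \big[Num.min/F ord0]_(k < n.+1) F k = F k.
Proof.
apply: (big_ind (fun y => exists k, y = F k)); first by exists ord0.
  by move=> _ _ [i ->] [j ->]; case: (leP (F i) (F j)); [exists i|exists j].
by move=> i _; exists i.
Qed.

Section Profile.
Variable R : realType.
Variables (m : nat) (S : 'I_m.+1 -> seq R) (M : R).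
Hypothesis S_pdist : forall k, is_pdist (S k).
Hypothesis S_mass : forall k, mass (S k) = M.

Lemma Profile_in01 x : 0 < x <= M -> Profile S x \in `]0, 1]%R.
Proof.
move=> x_in; rewrite /Profile; have [k ->] := bigmin_attained (fun k => Sketch (S k) x).
rewrite in_itv /=; apply: Sketch_in01; rewrite ?S_mass //.
- exact: (S_pdist k).1.
- by rewrite -(S_mass k); exact: (S_pdist k).2.2.
Qed.

Lemma Profile_nondecr x y : 0 < x -> x <= y -> y <= M -> Profile S x <= Profile S y.
Proof.
move=> x_gt xy y_le.
have Sketch_nondecr_S k : Sketch (S k) x <= Sketch (S k) y.
  by apply: Sketch_nondecr; rewrite ?S_mass //; exact: pdist_sorted_nonneg.
rewrite /Profile; apply: le_bigmin => [|k _].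
  exact: le_trans (bigmin_le _ ord0 _) (Sketch_nondecr_S ord0).
exact: le_trans (bigmin_le _ k _) (Sketch_nondecr_S k).
Qed.

Lemma entropy_profile_le d : major_feasible S M d ->
  (entropy_profile S M <= (entropy_seq d)%:E)%E.
Proof.
move=> [d_pd [d_mass Sketch_le]]; rewrite entropy_seq_integral // d_mass /entropy_profile.
have d_sn := pdist_sorted_nonneg d_pd.
have d_ge0 := d_sn.1.
have M_le1 : M <= 1 by rewrite -d_mass; exact: d_pd.2.2.
have Sketch_d_in01 x : 0 < x <= M -> Sketch d x \in `]0, 1]%R.
  by move=> x_in; rewrite in_itv /= Sketch_in01 ?d_mass.
apply: (@ge0_le_integral _ _ _ (@lebesgue_measure R)) => //.
- by move=> x /= x_in; rewrite lee_fin log2V_ge0 // Profile_in01.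
- apply/measurable_EFinP; apply: measurable_nonincr_itv => x y.
  rewrite !in_itv /= => x_in /andP[y_gt y_le] yx.
  by apply: log2V_nonincr; rewrite ?Profile_in01 ?y_gt ?Profile_nondecr //; case/andP: x_in.
- by apply: (measurable_h_Sketch (@log2V_nonincr R)); rewrite ?d_mass.
- move=> x /= x_in; rewrite lee_fin.
  by apply: log2V_nonincr; rewrite ?Sketch_le ?Profile_in01 ?Sketch_d_in01.
Qed.

End Profile.

Section CouplingValues.
Variable R : realType.
Variables (m : nat) (S : 'I_m.+1 -> seq R) (C : tuple_idx S -> R).
Hypothesis C_coupling : is_coupling C.

Definition coupling_values : seq R :=
  sort (fun x y => y <= x) [seq C t | t <- enum (tuple_idx S)].

Lemma big_coupling_values (F : R -> R) :
  \sum_(y <- coupling_values) F y = \sum_(t : tuple_idx S) F (C t).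
Proof.
by rewrite (perm_big _ (permEl (perm_sort _ _))) big_map -[RHS]big_enum.
Qed.

Lemma size_le_maxsize k : (size (S k) <= maxsize S)%N.
Proof. exact: leq_bigmax. Qed.

Lemma big_maxsize k (F : R -> R) : F 0 = 0 ->
  \sum_(i < maxsize S) F (S k)`_i = \sum_(0 <= j < size (S k)) F (S k)`_j.
Proof. by move=> F0; rewrite big_ord_nth_pad ?size_le_maxsize // big_mkord. Qed.

Lemma sum_by_marginal k (G : 'I_(maxsize S) -> R -> R) :
  \sum_(t : tuple_idx S) G (t k) (C t) =
  \sum_(i < maxsize S) \sum_(t : tuple_idx S | t k == i) G i (C t).
Proof.
rewrite (partition_big (fun t : tuple_idx S => t k) xpredT) //=.
by apply: eq_bigr => i _; apply: eq_bigr => t /eqP ->.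
Qed.

Lemma coupling_le_marginal k t : C t <= (S k)`_(t k).
Proof.
rewrite -(C_coupling.2 k (t k)) (bigD1 t) //= lerDl.
by apply: sumr_ge0 => t' _; exact: C_coupling.1.
Qed.

Lemma coupling_values_sorted_nonneg : sorted_nonneg coupling_values.
Proof.
split; last by apply: sort_sorted => x y; exact: le_total.
by apply/allP => y; rewrite mem_sort => /mapP [t _ ->]; exact: C_coupling.1.
Qed.

Lemma mass_coupling_values k : mass coupling_values = mass (S k).
Proof.
rewrite -(tailmass0 (S k)) /mass big_coupling_values (sum_by_marginal k (fun _ c => c)).
under eq_bigr => i _ do rewrite (C_coupling.2 k i).
by rewrite (big_maxsize k (F := id)).
Qed.

Lemma lower_mass_le_coupling_values k v :
  lower_mass (S k) v <= lower_mass coupling_values v.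
Proof.
rewrite /lower_mass -(big_maxsize k (F := fun y => if y <= v then y else 0)); last by case: ifP.
rewrite -(big_nth 0 xpredT (fun y => if y <= v then y else 0)) big_coupling_values.
rewrite (eq_bigr (fun i : 'I_(maxsize S) =>
  \sum_(t : tuple_idx S | t k == i) if (S k)`_i <= v then C t else 0)); last first.
  by move=> i _; case: ifP => _; [rewrite (C_coupling.2 k i)|rewrite big1].
rewrite -(sum_by_marginal k (fun i c => if (S k)`_i <= v then c else 0)).
apply: ler_sum => t _; case: ifP => [Sk_le|_].
  by rewrite (le_trans (coupling_le_marginal k t) Sk_le).
by case: ifP => // _; exact: C_coupling.1.
Qed.

Lemma Sketch_coupling_values_le k x : sorted_nonneg (S k) -> 0 < x <= mass (S k) ->
  Sketch coupling_values x <= Sketch (S k) x.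
Proof.
move=> Sk_sn x_in.
have x_in' : 0 < x <= mass coupling_values by rewrite (mass_coupling_values k).
rewrite (Sketch_leE _ coupling_values_sorted_nonneg x_in').
by apply: le_trans (lower_mass_le_coupling_values k _); rewrite -(Sketch_leE _ Sk_sn x_in).
Qed.

Lemma coupling_values_major_feasible M : (forall k, is_pdist (S k)) ->
  (forall k, mass (S k) = M) -> major_feasible S M coupling_values.
Proof.
move=> S_pdist S_mass; have [cv_ge0 cv_sorted] := coupling_values_sorted_nonneg.
have cv_mass : mass coupling_values = M by rewrite (mass_coupling_values ord0).
split; first by do !split=> //; rewrite cv_mass -(S_mass ord0); exact: (S_pdist ord0).2.2.
split=> // x x_in; apply: le_bigmin => [|k _].
all: by apply: Sketch_coupling_values_le; rewrite ?S_mass //; exact: pdist_sorted_nonneg.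
Qed.

Lemma entropy_coupling_values : entropy_seq coupling_values = entropy_coupling C.
Proof. by rewrite /entropy_seq big_coupling_values. Qed.

End CouplingValues.

Section InvSketchIntegrals.
Variable R : realType.
Implicit Types p q : seq R.
Local Open Scope classical_set_scope.

Lemma invr_ge0_itv01 : {in `]0, 1]%R, forall s : R, 0 <= s^-1}.
Proof. by move=> s; rewrite in_itv /= invr_ge0 => /andP[/ltW]. Qed.

Lemma invr_nonincr_itv01 : {in `]0, 1]%R &, {homo (@GRing.inv R) : s t /~ s <= t}}.
Proof. by move=> t s; rewrite !in_itv /= => /andP[t_gt _] /andP[s_gt _] st; rewrite lef_pV2. Qed.

Notation invSketch_integral p a b :=
  (\int[@lebesgue_measure R]_(x in `]a, b]) ((Sketch p x)^-1)%:E)%E.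

Lemma invSketch_integral_le_count p n : sorted_nonneg p -> mass p <= 1 ->
  (invSketch_integral p (tailmass p n) (mass p) <= n%:R%:E)%E.
Proof.
move=> p_sn mass_le1; set n' := minn n (size p).
have -> : tailmass p n = tailmass p n'.
  by rewrite /n'; case: leqP => // /ltnW size_le; rewrite !tailmass_out.
rewrite integral_h_Sketch ?geq_minr //; [|exact: invr_ge0_itv01|exact: invr_nonincr_itv01].
rewrite lee_fin (le_trans (y := \sum_(j < n') 1)) //.
  by apply: ler_sum => j _; case: (eqVneq p`_j 0) => [->|pj_neq0]; rewrite ?mul0r ?mulfV.
by rewrite sumr_const card_ord ler_nat geq_minl.
Qed.

Lemma invSketch_integral_count p n : sorted_nonneg p -> mass p <= 1 ->
  0 < tailmass p n -> invSketch_integral p (tailmass p n) (mass p) = n%:R%:E.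
Proof.
move=> p_sn mass_le1 tail_gt0.
have n_lt : (n < size p)%N.
  by rewrite ltnNge; apply: contraTN tail_gt0 => /tailmass_out ->; rewrite ltxx.
have pn_gt0 : 0 < p`_n.
  rewrite lt_def nth_nonneg ?andbT; last exact: p_sn.1.
  apply: contraTneq tail_gt0 => pn0; rewrite -leNgt /tailmass big_nat_cond.
  by apply: sumr_le0 => j /andP[/andP[nj _] _]; move: (nth_nonincr p_sn nj); rewrite pn0.
rewrite integral_h_Sketch ?(ltnW n_lt) //; [|exact: invr_ge0_itv01|exact: invr_nonincr_itv01].
congr (_%:E); rewrite -[n in RHS]card_ord -sumr_const; apply: eq_bigr => j _.
by rewrite mulfV // gt_eqF // (lt_le_trans pn_gt0) // nth_nonincr // ltnW.
Qed.

Lemma invSketch_integral_ge_length p a b : sorted_nonneg p -> mass p <= 1 ->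
  0 <= a <= b -> b <= mass p -> ((b - a)%:E <= invSketch_integral p a b)%E.
Proof.
move=> p_sn mass_le1 /andP[a_ge0 ab] b_le; have p_ge0 := p_sn.1.
have -> : (b - a)%:E = (\int[@lebesgue_measure R]_(x in `]a, b]) (cst 1%E) x)%E.
  rewrite integral_cst //= lebesgue_measure_itv /= lte_fin mul1e.
  by case: ltgtP ab => // ->; rewrite subrr.
apply: ge0_le_integral => //.
- exact: (measurable_h_Sketch invr_nonincr_itv01).
- move=> x; rewrite /= in_itv /= => /andP[a_lt x_le].
  have /andP[Sx_gt Sx_le1] : 0 < Sketch p x <= 1.
    by apply: Sketch_in01; rewrite // (le_lt_trans a_ge0 a_lt) (le_trans x_le b_le).
  by rewrite lee_fin invf_ge1.
Qed.

Lemma invSketch_integral_ge_count_length p n a : sorted_nonneg p -> mass p <= 1 ->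
  0 <= a < tailmass p n ->
  ((tailmass p n - a)%:E + n%:R%:E <= invSketch_integral p a (mass p))%E.
Proof.
move=> p_sn mass_le1 /andP[a_ge0 a_lt]; have p_ge0 := p_sn.1.
set t := tailmass p n in a_lt *.
have t_le : t <= mass p := tailmass_le_mass n p_ge0.
have split_itv : `]a, mass p] = `]a, t] `|` `]t, mass p].
  by apply: itv_bndbnd_setU; rewrite bnd_simp // ltW.
rewrite split_itv ge0_integral_setU // -?split_itv; last 3 first.
- exact: (measurable_h_Sketch invr_nonincr_itv01).
- move=> x /=; rewrite in_itv /= => /andP[a_lt' x_le].
  rewrite lee_fin invr_ge0_itv01 // in_itv /=.
  by apply: Sketch_in01; rewrite // (le_lt_trans a_ge0 a_lt').
- apply/disj_setPS => x []; rewrite /= !in_itv /= => /andP[_ x_le] /andP[x_gt _].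
  by move: (le_lt_trans x_le x_gt); rewrite ltxx.
rewrite invSketch_integral_count ?(le_lt_trans a_ge0 a_lt) //.
by rewrite leeD2r // invSketch_integral_ge_length // a_ge0 ltW.
Qed.

Lemma tailmass_le_of_Sketch_le p q : sorted_nonneg p -> sorted_nonneg q ->
  mass q = mass p -> mass p <= 1 ->
  (forall x, 0 < x <= mass p -> Sketch q x <= Sketch p x) ->
  forall n, tailmass p n <= tailmass q n.
Proof.
move=> p_sn q_sn q_mass mass_le1 Sketch_le n; rewrite leNgt; apply/negP => tail_lt.
have [p_ge0 q_ge0] := (p_sn.1, q_sn.1).
set a := tailmass q n in tail_lt.
have a_ge0 : 0 <= a := tailmass_ge0 n q_ge0.
have p_le_q : (invSketch_integral p a (mass p) <= invSketch_integral q a (mass q))%E.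
  rewrite q_mass; apply: ge0_le_integral => //.
  - move=> x /=; rewrite in_itv /= => /andP[a_lt x_le].
    rewrite lee_fin invr_ge0_itv01 // in_itv /=.
    by apply: Sketch_in01; rewrite // (le_lt_trans a_ge0 a_lt).
  - exact: (measurable_h_Sketch invr_nonincr_itv01).
  - by apply: (measurable_h_Sketch invr_nonincr_itv01); rewrite ?q_mass.
  - move=> x /=; rewrite in_itv /= => /andP[a_lt x_le].
    have x_in : 0 < x <= mass p by rewrite (le_lt_trans a_ge0 a_lt).
    have Sp_in : Sketch p x \in `]0, 1]%R by rewrite in_itv /= Sketch_in01.
    have Sq_in : Sketch q x \in `]0, 1]%R by rewrite in_itv /= Sketch_in01 ?q_mass.
    by apply: invr_nonincr_itv01; rewrite ?Sketch_le.
have a_in : 0 <= a < tailmass p n by rewrite a_ge0 tail_lt.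
have q_mass_le1 : mass q <= 1 by rewrite q_mass.
have p_lower := invSketch_integral_ge_count_length p_sn mass_le1 a_in.
have q_upper := invSketch_integral_le_count n q_sn q_mass_le1.
move: (le_trans p_lower (le_trans p_le_q q_upper)); rewrite -EFinD lee_fin => count_le.
have t_le_a : tailmass p n <= a by lra.
by move: tail_lt; rewrite ltNge t_le_a.
Qed.

Lemma prefix_le_of_Sketch_le p q : sorted_nonneg p -> sorted_nonneg q ->
  mass q = mass p -> mass p <= 1 ->
  (forall x, 0 < x <= mass p -> Sketch q x <= Sketch p x) ->
  forall n, Defs.prefix q n <= Defs.prefix p n.
Proof.
move=> p_sn q_sn q_mass mass_le1 Sketch_le n.
have := tailmass_le_of_Sketch_le p_sn q_sn q_mass mass_le1 Sketch_le n.
have := prefix_tailmass q n; have := prefix_tailmass p n; rewrite q_mass; lra.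
Qed.

End InvSketchIntegrals.

Section Meet.
Variable R : realType.
Variables (m : nat) (S : 'I_m.+1 -> seq R).

Definition min_prefix n : R :=
  \big[Num.min/Defs.prefix (S ord0) n]_(k < m.+1) Defs.prefix (S k) n.

Lemma min_prefix0 : min_prefix 0 = 0.
Proof.
rewrite /min_prefix; have [k ->] := bigmin_attained (fun k => Defs.prefix (S k) 0).
by rewrite /Defs.prefix big_ord0.
Qed.

Lemma size_meet_rec n : size (meet_rec S n) = n.
Proof. by elim: n => //= n IH; rewrite size_rcons IH. Qed.

Lemma sum_meet_rec n : \sum_(y <- meet_rec S n) y = min_prefix n.
Proof.
elim: n => [|n IH]; first by rewrite big_nil min_prefix0.
by rewrite /= -cats1 big_cat big_seq1 IH /= -/(min_prefix n.+1) addrC subrK.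
Qed.

Lemma nth_meet_rec n i : (i < n)%N -> (meet_rec S n)`_i = min_prefix i.+1 - min_prefix i.
Proof.
elim: n => // n IH; rewrite ltnS leq_eqVlt => /orP[/eqP ->|i_lt] /=.
  by rewrite nth_rcons size_meet_rec ltnn eqxx sum_meet_rec.
by rewrite nth_rcons size_meet_rec i_lt IH.
Qed.

Lemma min_prefix_stable i : (maxsize S <= i)%N -> min_prefix i.+1 = min_prefix i.
Proof.
move=> i_ge; have prefix_stable k : Defs.prefix (S k) i.+1 = Defs.prefix (S k) i.
  by rewrite prefixS nth_default ?addr0 // (leq_trans (size_le_maxsize S k)).
by rewrite /min_prefix prefix_stable; apply: eq_bigr => k _; rewrite prefix_stable.
Qed.

Lemma nth_meetS i : (meetS S)`_i = min_prefix i.+1 - min_prefix i.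
Proof.
case: (ltnP i (maxsize S)) => [|i_ge]; first exact: nth_meet_rec.
by rewrite nth_default ?size_meet_rec // min_prefix_stable // subrr.
Qed.

Lemma prefix_meetS n : Defs.prefix (meetS S) n = min_prefix n.
Proof.
rewrite /Defs.prefix (eq_bigr (fun i : 'I_n => min_prefix i.+1 - min_prefix i)) => [|i _].
  rewrite -(big_mkord xpredT (fun i => min_prefix i.+1 - min_prefix i)).
  by rewrite telescope_sumr // min_prefix0 subr0.
by rewrite nth_meetS.
Qed.

Hypothesis S_pdist : forall k, is_pdist (S k).

Lemma min_prefix_nondecr i : min_prefix i <= min_prefix i.+1.
Proof.
have prefix_le k : Defs.prefix (S k) i <= Defs.prefix (S k) i.+1.
  by rewrite prefixS lerDl nth_nonneg //; exact: (S_pdist k).1.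
rewrite /min_prefix; apply: le_bigmin => [|k _].
  exact: le_trans (bigmin_le _ ord0 _) (prefix_le ord0).
exact: le_trans (bigmin_le _ k _) (prefix_le k).
Qed.

(* At the index k attaining min_prefix (i+1), the increments of min_prefix are
   squeezed by those of the nonincreasing p_k. *)
Lemma min_prefix_concave i :
  min_prefix i.+2 - min_prefix i.+1 <= min_prefix i.+1 - min_prefix i.
Proof.
have [k min_k] := bigmin_attained (fun k => Defs.prefix (S k) i.+1).
rewrite -/(min_prefix i.+1) in min_k.
have le2 : min_prefix i.+2 <= Defs.prefix (S k) i.+2 := bigmin_le _ k _.
have le0 : min_prefix i <= Defs.prefix (S k) i := bigmin_le _ k _.
have Sk_nonincr : (S k)`_i.+1 <= (S k)`_i by apply: nth_nonincr => //; exact: pdist_sorted_nonneg.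
move: le2 le0; rewrite min_k !prefixS; lra.
Qed.

Lemma nth_meetS_ge0 i : 0 <= (meetS S)`_i.
Proof. by rewrite nth_meetS subr_ge0 min_prefix_nondecr. Qed.

Lemma nth_meetS_nonincr i j : (i <= j)%N -> (meetS S)`_j <= (meetS S)`_i.
Proof.
move=> /subnK <-; elim: (j - i)%N => // d IH.
by rewrite addSn !nth_meetS; apply: le_trans (min_prefix_concave _) _; rewrite -!nth_meetS.
Qed.

End Meet.

Section Karamata.
Variable R : realType.
Implicit Types x y u v : R.

Definition xlnV x : R := x * ln x^-1.

Definition xlnV' x : R := - ln x - 1.

(* Chord slopes of xlnV, extended by the derivative on the diagonal so that the
   slope stays nonincreasing in both arguments (the value at (0, 0) is unused). *)
Definition xlnV_slope u v : R :=
  if u == v then (if u == 0 then 0 else xlnV' u) else (xlnV v - xlnV u) / (v - u).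

Lemma xlnV0 : xlnV 0 = 0.
Proof. by rewrite /xlnV mul0r. Qed.

Lemma xlnVE x : 0 < x -> xlnV x = - (x * ln x).
Proof. by move=> x_gt0; rewrite /xlnV lnV ?posrE // mulrN. Qed.

Lemma xlnV_tangent x y : 0 < x -> 0 <= y -> xlnV y <= xlnV x + xlnV' x * (y - x).
Proof.
move=> x_gt0; rewrite le_eqVlt => /orP[/eqP <-|y_gt0].
  by rewrite xlnV0 xlnVE // /xlnV'; lra.
rewrite !xlnVE // /xlnV'.
have := le_ln1Dx (x := x / y - 1) (ltac:(by rewrite ltrBrDl subrr divr_gt0)).
rewrite addrC subrK lnM ?posrE ?invr_gt0 // lnV ?posrE // => ln_le.
have scaled : y * (x / y - 1) = x - y by field; rewrite gt_eqF.
have : y * (ln x - ln y) <= y * (x / y - 1) by rewrite ler_pM2l //; lra.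
rewrite scaled; nra.
Qed.

Lemma xlnV_slopeK u v : xlnV_slope u v * (v - u) = xlnV v - xlnV u.
Proof.
rewrite /xlnV_slope; case: eqP => [->|/eqP uv]; first by rewrite !subrr mulr0.
by rewrite divfK // subr_eq0 eq_sym.
Qed.

Lemma xlnV_slopeC u v : xlnV_slope u v = xlnV_slope v u.
Proof.
rewrite /xlnV_slope eq_sym; case: eqP => [->//|_].
by rewrite -mulrNN -invrN !opprB.
Qed.

Lemma xlnV_slope_diag u : u != 0 -> xlnV_slope u u = xlnV' u.
Proof. by rewrite /xlnV_slope eqxx => /negPf ->. Qed.

Lemma xlnV'_le_slope x y : 0 <= x -> x < y -> xlnV' y <= xlnV_slope x y.
Proof.
move=> x_ge0 xy; rewrite /xlnV_slope lt_eqF // ler_pdivlMr ?subr_gt0 //.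
have := xlnV_tangent (le_lt_trans x_ge0 xy) x_ge0; nra.
Qed.

Lemma xlnV_slope_le' x y : 0 < x -> x < y -> xlnV_slope x y <= xlnV' x.
Proof.
move=> x_gt0 xy; rewrite /xlnV_slope lt_eqF // ler_pdivrMr ?subr_gt0 //.
have := xlnV_tangent x_gt0 (ltW (lt_trans x_gt0 xy)); nra.
Qed.

Lemma xlnV_slope_nonincr_r u v v' : 0 <= u -> 0 <= v' -> v' <= v ->
  (u != 0) || (v' != 0) -> xlnV_slope u v <= xlnV_slope u v'.
Proof.
move=> u_ge0 v'_ge0 v'v nz; case: (ltgtP v' v) v'v => // [v'_lt|->] _; last by [].
case: (ltgtP u v') => [uv'|v'u|uv'].
- have := xlnV_slopeK u v; have := xlnV_slopeK u v'; have := xlnV_slopeK v' v.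
  have := xlnV_slope_le' (le_lt_trans u_ge0 uv') v'_lt; have := xlnV'_le_slope u_ge0 uv'.
  have vu : 0 < v - u by rewrite subr_gt0 (lt_trans uv' v'_lt).
  move=> *; have : (xlnV_slope u v - xlnV_slope u v') * (v - u) <= 0 by nra.
  by rewrite pmulr_lle0 // subr_le0.
- have u_gt0 := le_lt_trans v'_ge0 v'u.
  rewrite [xlnV_slope u v']xlnV_slopeC; case: (ltgtP u v) => [uv|vu|<-].
  + exact: le_trans (xlnV_slope_le' u_gt0 uv) (xlnV'_le_slope v'_ge0 v'u).
  + rewrite [xlnV_slope u v]xlnV_slopeC.
    have := xlnV_slopeK v u; have := xlnV_slopeK v' u; have := xlnV_slopeK v' v.
    have := xlnV'_le_slope v'_ge0 v'_lt; have := xlnV_slope_le' (le_lt_trans v'_ge0 v'_lt) vu.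
    have uv' : 0 < u - v' by rewrite subr_gt0.
    move=> *; have : (xlnV_slope v u - xlnV_slope v' u) * (u - v') <= 0 by nra.
    by rewrite pmulr_lle0 // subr_le0.
  + by rewrite xlnV_slope_diag ?gt_eqF // xlnV'_le_slope.
- have u_neq0 : u != 0 by move: nz; rewrite -uv' orbb.
  have u_gt0 : 0 < u by rewrite lt_neqAle eq_sym u_neq0.
  by rewrite -uv' xlnV_slope_diag // xlnV_slope_le' // uv'.
Qed.

Lemma xlnV_slope_nonincr u v u' v' : 0 <= u' -> u' <= u -> 0 <= v' -> v' <= v ->
  (u' != 0) || (v' != 0) -> xlnV_slope u v <= xlnV_slope u' v'.
Proof.
move=> u'_ge0 u'u v'_ge0 v'v nz.
have nz' : (u != 0) || (v' != 0).
  case/orP: nz => [u'_neq0|->]; last by rewrite orbT.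
  by rewrite gt_eqF // (lt_le_trans _ u'u) // lt_neqAle eq_sym u'_neq0.
apply: le_trans (xlnV_slope_nonincr_r (le_trans u'_ge0 u'u) v'_ge0 v'v nz') _.
by rewrite xlnV_slopeC [xlnV_slope u' v']xlnV_slopeC xlnV_slope_nonincr_r // orbC.
Qed.

Lemma summation_by_parts (c d : nat -> R) N :
  \sum_(i < N.+1) c i * d i =
  c N * \sum_(i < N.+1) d i - \sum_(i < N) (\sum_(j < i.+1) d j) * (c i.+1 - c i).
Proof.
elim: N => [|N IH]; first by rewrite !big_ord1 big_ord0 subr0.
rewrite big_ord_recr /= IH [\sum_(i < N.+2) d i]big_ord_recr.
by rewrite [\sum_(i < N.+1) _ * _]big_ord_recr /=; ring.
Qed.

(* Abel summation writes the difference of the two sums as - sum_i D_i (c_(i+1) - c_i),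
   where the D_i <= 0 are the partial sums of b - a and c_i is the chord slope at
   (a_i, b_i), which increases with i by concavity. *)
Lemma karamata_xlnV (a b : nat -> R) N :
  (forall i, 0 <= a i) -> (forall i, 0 <= b i) ->
  (forall i j, (i <= j)%N -> a j <= a i) -> (forall i j, (i <= j)%N -> b j <= b i) ->
  (forall n, (n <= N)%N -> \sum_(i < n) b i <= \sum_(i < n) a i) ->
  \sum_(i < N) b i = \sum_(i < N) a i ->
  \sum_(i < N) xlnV (a i) <= \sum_(i < N) xlnV (b i).
Proof.
move=> a_ge0 b_ge0 a_nonincr b_nonincr prefix_le; case: N prefix_le => [|N] prefix_le total_eq.
  by rewrite !big_ord0.
rewrite -subr_ge0 -sumrB.
under eq_bigr => i _ do rewrite -xlnV_slopeK.
rewrite (summation_by_parts (fun i => xlnV_slope (a i) (b i)) (fun i => b i - a i)).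
rewrite sumrB total_eq subrr mulr0 sub0r oppr_ge0.
apply: sumr_le0 => i _.
have partial_le0 : \sum_(j < i.+1) (b j - a j) <= 0.
  by rewrite sumrB subr_le0 prefix_le // ltnS ltnW.
case: (ltrgt0P (\sum_(j < i.+1) (b j - a j))) partial_le0 => // [partial_lt0 _|->];
  last by rewrite mul0r.
rewrite nmulr_rle0 // subr_ge0 xlnV_slope_nonincr ?a_ge0 ?b_ge0 ?a_nonincr ?b_nonincr //.
rewrite -negb_and; apply: contraTN partial_lt0 => /andP[/eqP ai0 /eqP bi0].
have tail_zero j : (i < j)%N -> b j - a j = 0.
  move=> ij.
  have aj0 : a j = 0 by apply/eqP; rewrite eq_le a_ge0 andbT -ai0 a_nonincr.
  have bj0 : b j = 0 by apply/eqP; rewrite eq_le b_ge0 andbT -bi0 b_nonincr.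
  by rewrite aj0 bj0 subrr.
have : \sum_(j < N.+1) (b j - a j) = \sum_(j < i.+1) (b j - a j).
  rewrite -!(big_mkord xpredT (fun j => b j - a j)) (@big_cat_nat _ _ _ i.+1) //=.
    rewrite [X in _ + X]big1_seq ?addr0 // => j /andP[_].
    by rewrite mem_index_iota => /andP[ij _]; exact: tail_zero.
  by rewrite ltnS ltnW.
by rewrite sumrB total_eq subrr => <-; rewrite ltxx.
Qed.

End Karamata.

Section MeetEntropy.
Variable R : realType.

Lemma entropy_seq_xlnV (s : seq R) N : (size s <= N)%N ->
  entropy_seq s = (\sum_(i < N) xlnV s`_i) / ln 2.
Proof.
move=> size_le; rewrite entropy_seqE (big_ord_nth_pad (F := @xlnV R)) ?xlnV0 //.
by rewrite mulr_suml; apply: eq_bigr => i _; rewrite /xlnV /log2 mulrA.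
Qed.

Lemma entropy_meetS_le (m : nat) (S : 'I_m.+1 -> seq R) (M : R) d :
  (forall k, is_pdist (S k)) -> (forall k, mass (S k) = M) ->
  major_feasible S M d -> entropy_seq (meetS S) <= entropy_seq d.
Proof.
move=> S_pdist S_mass [d_pd [d_mass Sketch_le]].
have d_sn := pdist_sorted_nonneg d_pd.
set N := (maxsize S + size d)%N.
rewrite (entropy_seq_xlnV (N := N)) ?size_meet_rec ?leq_addr //.
rewrite (entropy_seq_xlnV (s := d) (N := N)) ?leq_addl //.
rewrite ler_pM2r ?invr_gt0 ?ln2_gt0 //.
have M_le1 : M <= 1 by rewrite -d_mass; exact: d_pd.2.2.
have prefix_d_le k n : Defs.prefix d n <= Defs.prefix (S k) n.
  apply: prefix_le_of_Sketch_le; rewrite ?S_mass ?d_mass //.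
    exact: pdist_sorted_nonneg.
  by move=> x x_in; apply: le_trans (Sketch_le x x_in) (bigmin_le _ k _).
have prefix_full (p : seq R) : (size p <= N)%N -> Defs.prefix p N = mass p.
  by move=> size_le; rewrite -(prefix_tailmass p N) tailmass_out ?addr0.
apply: karamata_xlnV.
- exact: nth_meetS_ge0.
- by move=> i; apply: nth_nonneg; exact: d_sn.1.
- exact: nth_meetS_nonincr.
- by move=> i j; exact: nth_nonincr.
- move=> n _; move: (prefix_meetS S n); rewrite /Defs.prefix => ->.
  by apply: le_bigmin => [|k _]; exact: prefix_d_le.
- move: (prefix_meetS S N) (prefix_full d (leq_addl _ _)); rewrite /Defs.prefix => -> ->.
  rewrite d_mass /min_prefix; have [k ->] := bigmin_attained (fun k => Defs.prefix (S k) N).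
  by rewrite prefix_full ?S_mass // (leq_trans (size_le_maxsize S k)) ?leq_addr.
Qed.

End MeetEntropy.

Theorem theorem4 (R : realType) (m : nat) (S : 'I_m.+1 -> seq R) (M : R)
  (hS : forall k, is_pdist (S k))
  (hM : forall k, mass (S k) = M)
  (OPT : tuple_idx S -> R)
  (hOPT : is_coupling OPT)
  (hOPTmin : forall C : tuple_idx S -> R, is_coupling C ->
               entropy_coupling OPT <= entropy_coupling C)
  (MP : seq R)
  (hMP : major_feasible S M MP)
  (hMPmin : forall d : seq R, major_feasible S M d -> entropy_seq MP <= entropy_seq d) :
  entropy_seq MP <= entropy_coupling OPT /\
  (maxe (entropy_profile S M) (entropy_seq (meetS S))%:E <= (entropy_seq MP)%:E)%E.
Proof.
split.
  rewrite -(entropy_coupling_values OPT); apply: hMPmin.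
  exact: coupling_values_major_feasible.
rewrite ge_max entropy_profile_le // lee_fin.
exact: entropy_meetS_le hMP.
Qed.
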